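(* Let $n\ge 1$ and $a\ge 2$ be integers and $r>0$. For $j\in\mathbb Z$ let $P_j=\bigl(r\cos(2\pi j/n),\, r\sin(2\pi j/n)\bigr)$. Let $E$ be the set of unordered pairs $\{s,t\}$ of distinct elements of $\mathbb Z_n$ such that $t\equiv as \pmod n$ or $s\equiv at \pmod n$ (the set of distinct non-degenerate line segments of the residue design, each counted once). Then \[\sum_{\{s,t\}\in E} |P_sP_t| \;=\; 2rg_1\cot\left(\frac{\pi g_1}{2n}\right)-rg_2\cot\left(\frac{\pi g_2}{2m}\right),\] where $m$ is the largest positive divisor of $n$ for which $a^2\equiv 1 \pmod m$, $g_1=\gcd(a-1,n)$ and $g_2=\gcd(a-1,m)$. *)

From Stdlib Require Import Reals.
From mathcomp Require Import all_boot all_order all_algebra.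
From mathcomp Require Import Rstruct.

Set Implicit Arguments.
Unset Strict Implicit.
Unset Printing Implicit Defensive.

Definition cot (x : R) : R := (cos x / sin x)%R.

Definition Ppt (n : nat) (r : R) (j : nat) : R * R :=
  ((r * cos (2 * PI * INR j / INR n))%R, (r * sin (2 * PI * INR j / INR n))%R).

Definition dist2 (P Q : R * R) : R :=
  sqrt ((P.1 - Q.1) ^ 2 + (P.2 - Q.2) ^ 2)%R.

(* E: unordered pairs {s,t} of distinct residues mod n with t = a s or s = a t (mod n);
   each unordered pair {s,t} is represented once, by the ordered pair (s,t) with s < t. *)
Definition edge (n a : nat) (p : 'I_n * 'I_n) : bool :=
  (p.1 < p.2)%N &&
  ((p.2 == a * p.1 %[mod n]) || (p.1 == a * p.2 %[mod n])).

Definition mdiv (n a : nat) : nat :=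
  \max_(d < n.+1 | (0 < d)%N && (d %| n) && (a ^ 2 == 1 %[mod d])) d.

Definition total_length (n a : nat) (r : R) : R :=
  (\sum_(p : 'I_n * 'I_n | edge a p) dist2 (Ppt n r p.1) (Ppt n r p.2))%R.

(* The chord P_s P_t has length 2r|sin(pi (s - t) / n)|. The edges of the design
   are the pairs {s, as mod n}, so summing the chords from every s to as counts
   each edge once, except those with a^2 s = s (mod n), which are counted twice;
   these s are exactly the multiples of n/m. Both sums are of the form
   sum_{s<N} |sin(pi c s / N)|: with g = gcd(c, N), the summand is N/g-periodic
   in s and s |-> (c/g) s permutes the residues mod N/g, so the sum equals
   g * sum_{k<N/g} sin(pi k g / N), which telescopes to g cot(pi g / (2N)). *)

From Stdlib Require Import Reals Lra.
From mathcomp Require Import all_boot all_order all_algebra.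
From mathcomp Require Import Rstruct zify.
Import GRing.Theory.

Set Implicit Arguments.
Unset Strict Implicit.
Unset Printing Implicit Defensive.

Lemma mul_modn_inj c N i j : coprime c N -> (i < N)%N -> (j < N)%N ->
  c * i = c * j %[mod N] -> i = j.
Proof.
move=> cN; wlog le_ij : i j / (i <= j)%N.
  by move=> sym iN jN eq_ij; case/orP: (leq_total i j) => ?; [|apply/esym]; apply: sym.
move=> _ jN /eqP; rewrite eq_sym eqn_mod_dvd ?leq_mul2l ?le_ij ?orbT //.
rewrite -mulnBr Gauss_dvdr 1?coprime_sym // /dvdn modn_small; first by move/eqP; lia.
exact: leq_ltn_trans (leq_subr i j) jN.
Qed.

Lemma coprime_divn_gcd m n : (0 < gcdn m n)%N ->
  coprime (m %/ gcdn m n) (n %/ gcdn m n).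
Proof.
move=> g_gt0; rewrite /coprime -(eqn_pmul2r g_gt0) mul1n muln_gcdl.
by rewrite !divnK ?dvdn_gcdl ?dvdn_gcdr.
Qed.

Lemma dvdn_mul_divn_gcd c n s : (0 < n)%N ->
  (n %| c * s) = (n %/ gcdn c n %| s).
Proof.
move=> n_gt0; have g_gt0 : (0 < gcdn c n)%N by rewrite gcdn_gt0 n_gt0 orbT.
have := coprime_divn_gcd g_gt0; set g := gcdn c n => cop.
rewrite -[n in n %| _](divnK (dvdn_gcdr c n)) -/g.
rewrite -[c in c * s](divnK (dvdn_gcdl c n)) -/g.
by rewrite mulnAC dvdn_pmul2r // Gauss_dvdr // coprime_sym.
Qed.

Lemma mdivE n a : (0 < n)%N -> (0 < a)%N -> mdiv n a = gcdn (a ^ 2 - 1) n.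
Proof.
move=> n_gt0 a_gt0; set m := gcdn _ n.
have m_gt0 : (0 < m)%N by rewrite gcdn_gt0 n_gt0 orbT.
have dvd_m d : (d %| n) && (a ^ 2 == 1 %[mod d]) = (d %| m).
  by rewrite eqn_mod_dvd ?expn_gt0 ?a_gt0 // dvdn_gcd andbC.
apply/eqP; rewrite eqn_leq; apply/andP; split.
  apply/bigmax_leqP => d /andP[/andP[_ dn] da].
  by apply: dvdn_leq; rewrite // -dvd_m dn.
have m_lt : (m < n.+1)%N by rewrite ltnS dvdn_leq // dvdn_gcdr.
by apply: (leq_trans _ (leq_bigmax_cond (Ordinal m_lt) _)); rewrite //= m_gt0 dvd_m.
Qed.

Lemma mulmod_twice_eq n a s : (0 < a)%N -> (s < n)%N ->
  ((a * ((a * s) %% n)) %% n == s) = (n %/ gcdn (a ^ 2 - 1) n %| s).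
Proof.
move=> a_gt0 s_lt; have n_gt0 : (0 < n)%N by apply: leq_ltn_trans s_lt.
rewrite -{2}(modn_small s_lt) modnMmr mulnA mulnn.
rewrite eqn_mod_dvd ?leq_pmull ?expn_gt0 ?a_gt0 //.
by rewrite -[X in _ - X]mul1n -mulnBl dvdn_mul_divn_gcd.
Qed.

Section PeriodicSums.

Variables (V : nmodType) (N : nat) (F : nat -> V).
Hypothesis F_periodic : forall i, F (i + N) = F i.

Lemma periodic_addnM i k : F (i + k * N) = F i.
Proof. by elim: k => [|k IH]; rewrite ?mul0n ?addn0 // mulSn addnCA addnC F_periodic. Qed.

Lemma periodic_modn i : F (i %% N) = F i.
Proof. by rewrite {2}(divn_eq i N) addnC periodic_addnM. Qed.

Lemma sum_periodic k : (\sum_(s < k * N) F s = (\sum_(s < N) F s) *+ k)%R.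
Proof.
rewrite -(big_mkord xpredT) big_nat_mul -[k in RHS]subn0 -sumr_const_nat.
apply: eq_bigr => i _; rewrite -{1}[i * N]add0n big_addn mulSn addnK.
by rewrite big_mkord; apply: eq_bigr => j _; rewrite periodic_addnM.
Qed.

Lemma sum_periodic_coprime_mul c : coprime c N ->
  (\sum_(s < N) F (c * s) = \sum_(s < N) F s)%R.
Proof.
case: (posnP N) => [-> _ | N_gt0 cN]; first by rewrite !big_ord0.
pose h (i : 'I_N) : 'I_N := Ordinal (ltn_pmod (c * i) N_gt0).
have h_inj : injective h.
  by move=> i j /(congr1 val) /mul_modn_inj eq_ij; apply/val_inj/eq_ij.
rewrite [RHS](reindex_inj h_inj); apply: eq_bigr => i _.
by rewrite periodic_modn.
Qed.

End PeriodicSums.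

Lemma sum_dvdn (V : nmodType) M n (G : nat -> V) : (0 < M)%N -> (M %| n)%N ->
  (\sum_(s < n | (M %| s)%N) G s = \sum_(u < n %/ M) G (M * u))%R.
Proof.
move=> M_gt0 /divnK <-; rewrite mulnK //; move: (n %/ M) => m.
rewrite big_mkcond -(big_mkord xpredT (fun s => if M %| s then G s else 0%R)).
rewrite big_nat_mul big_mkord; apply: eq_bigr => i _.
rewrite -{1}[i * M]add0n big_addn mulSn addnK big_ltn // add0n.
rewrite dvdn_mull // mulnC big1_seq ?Monoid.mulm1 // => j /andP[_].
by rewrite mem_index_iota => /andP[j_gt0 jM]; rewrite dvdn_addl ?dvdn_mulr // gtnNdvd.
Qed.

Lemma sumr_orb (V : zmodType) (I : finType) (A B : pred I) (G : I -> V) :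
  (\sum_(i | A i || B i) G i
   = \sum_(i | A i) G i + \sum_(i | B i) G i - \sum_(i | A i && B i) G i)%R.
Proof.
rewrite (big_mkcond (fun i => A i || B i)) (big_mkcond A) (big_mkcond B).
rewrite (big_mkcond (fun i => A i && B i)) -big_split -sumrB; apply: eq_bigr => i _.
by case: (A i); case: (B i); rewrite /= ?addrK ?addr0 ?add0r ?subr0.
Qed.

Lemma sum_pair_swap (V : nmodType) (I : finType) (P : pred (I * I))
    (G : I -> I -> V) :
  (\sum_(p | P p) G p.1 p.2 = \sum_(p | P (p.2, p.1)) G p.2 p.1)%R.
Proof.
by apply: (reindex_inj (h := fun p => (p.2, p.1))) => [[? ?] [? ?] [-> ->]].
Qed.

Section FunctionalGraph.

Variables (V : zmodType) (n : nat) (f : 'I_n -> 'I_n) (D : 'I_n -> 'I_n -> V).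
Hypotheses (DC : forall s t, D s t = D t s) (Dxx : forall s, D s s = 0%R).

Lemma sum_ltn_pairs (P : pred ('I_n * 'I_n)) : (forall s t, P (s, t) = P (t, s)) ->
  ((\sum_(p : 'I_n * 'I_n | (p.1 < p.2)%N && P p) D p.1 p.2) *+ 2
   = \sum_(p | P p) D p.1 p.2)%R.
Proof.
move=> PC; rewrite mulr2n {2}sum_pair_swap /= [RHS]big_mkcond.
rewrite (big_mkcond (fun p : 'I_n * 'I_n => (p.1 < p.2)%N && P p)).
rewrite (big_mkcond (fun p : 'I_n * 'I_n => (p.2 < p.1)%N && P (p.2, p.1))).
rewrite -big_split /=.
apply: eq_bigr => -[s t] _ /=; rewrite PC (DC t).
case: (ltngtP s t) => [_|_|/val_inj st]; rewrite ?andbF ?addr0 ?add0r //.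
by rewrite st Dxx if_same.
Qed.

Lemma sum_functional_graph_edges :
  ((\sum_(p : 'I_n * 'I_n | (p.1 < p.2)%N && ((p.2 == f p.1) || (p.1 == f p.2)))
      D p.1 p.2) *+ 2
   = (\sum_s D s (f s)) *+ 2 - \sum_(s | f (f s) == s) D s (f s))%R.
Proof.
rewrite sum_ltn_pairs => [|s t]; last exact: orbC.
have graph_sum : (\sum_(p | p.2 == f p.1) D p.1 p.2 = \sum_s D s (f s))%R.
  rewrite big_mkcond
    -(pair_big xpredT xpredT (fun s t => if t == f s then D s t else 0%R)) /=.
  by apply: eq_bigr => s _; rewrite -big_mkcond big_pred1_eq.
have cycle_sum : (\sum_(p | (p.2 == f p.1) && (p.1 == f p.2)) D p.1 p.2
                  = \sum_(s | f (f s) == s) D s (f s))%R.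
  rewrite big_mkcond -(pair_big xpredT xpredT (fun s t =>
    if (t == f s) && (s == f t) then D s t else 0%R)) /= [RHS]big_mkcond.
  apply: eq_bigr => s _; rewrite -big_mkcond big_mkcondr big_pred1_eq.
  by rewrite eq_sym.
have swap_sum : (\sum_(p | p.1 == f p.2) D p.1 p.2
                 = \sum_(p | p.2 == f p.1) D p.1 p.2)%R.
  by rewrite sum_pair_swap; apply: eq_bigr => p _; apply: DC.
by rewrite sumr_orb swap_sum graph_sum cycle_sum mulr2n.
Qed.

End FunctionalGraph.

Local Open Scope R_scope.

Lemma sin_half_mul_sum x K :
  2 * sin (x / 2) * (\sum_(k < K) sin (INR k * x))%R
  = cos (x / 2) - cos (INR K * x - x / 2).
Proof.
elim: K => [|K IH].
  rewrite big_ord0 Rmult_0_l Rminus_0_l cos_neg; change GRing.zero with R0; ring.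
rewrite big_ord_recr /= RplusE Rmult_plus_distr_l IH -/(INR K.+1) S_INR.
replace ((INR K + 1) * x - x / 2) with (INR K * x + x / 2) by field.
rewrite cos_plus cos_minus; ring.
Qed.

Lemma sum_sin_PI_div N : (0 < N)%N ->
  (\sum_(k < N) sin (PI * INR k / INR N))%R = cot (PI / (2 * INR N)).
Proof.
move=> N_gt0.
have N_ge1 : 1 <= INR N by apply: (le_INR 1); apply/leP.
have PI_gt0 := PI_RGT_0.
set y := PI / (2 * INR N).
have sin_y_gt0 : 0 < sin y.
  apply: sin_gt_0; rewrite /y; first by apply: Rdiv_lt_0_compat; lra.
  apply: (Rmult_lt_reg_r (2 * INR N)); first lra.
  field_simplify; nra.
have := sin_half_mul_sum (2 * y) N.
have -> : INR N * (2 * y) - 2 * y / 2 = PI - y by rewrite /y; field; lra.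
rewrite cos_minus cos_PI sin_PI (_ : 2 * y / 2 = y); last by field.
move=> telescope.
rewrite (eq_bigr (fun k : 'I_N => sin (INR k * (2 * y)))); last first.
  by move=> k _; congr sin; rewrite /y; field; lra.
rewrite /cot -RdivE.
apply: (Rmult_eq_reg_l (2 * sin y)); last lra.
rewrite telescope; field; lra.
Qed.

Lemma sum_abs_sin_mul c n : (0 < n)%N ->
  (\sum_(s < n) Rabs (sin (PI * INR (c * s) / INR n)))%R
  = INR (gcdn c n) * cot (PI * INR (gcdn c n) / (2 * INR n)).
Proof.
move=> n_gt0; have g_gt0 : (0 < gcdn c n)%N by rewrite gcdn_gt0 n_gt0 orbT.
move: (coprime_divn_gcd g_gt0) (divnK (dvdn_gcdl c n)) (divnK (dvdn_gcdr c n)).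
move: (gcdn c n) g_gt0 (c %/ gcdn c n) (n %/ gcdn c n) => g g_gt0 c' N cop <- n_eq.
subst n; have N_gt0 : (0 < N)%N by move: n_gt0; rewrite muln_gt0 => /andP[].
have N_pos : 0 < INR N by apply: (lt_INR 0); apply/ltP.
have g_pos : 0 < INR g by apply: (lt_INR 0); apply/ltP.
pose F k := Rabs (sin (PI * INR k / INR N)).
have F_periodic i : F (i + N)%N = F i.
  rewrite /F plus_INR (_ : PI * (INR i + INR N) / INR N = PI * INR i / INR N + PI).
    by rewrite neg_sin Rabs_Ropp.
  by field; lra.
rewrite (eq_bigr (fun s : 'I_(N * g) => F (c' * s)%N)); last first.
  by move=> s _; rewrite /F !mult_INR; congr (Rabs (sin _)); field; lra.
rewrite mulnC (@sum_periodic _ N (fun s => F (c' * s)%N)); last first.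
  by move=> i; rewrite mulnDr periodic_addnM.
rewrite sum_periodic_coprime_mul //.
rewrite (eq_bigr (fun k : 'I_N => sin (PI * INR k / INR N))); last first.
  move=> k _; rewrite /F Rabs_pos_eq //.
  have k_le : INR k <= INR N by apply/le_INR/leP/ltnW.
  have PI_gt0 := PI_RGT_0; have k_ge0 := pos_INR k.
  apply: sin_ge_0; first by apply: Rle_mult_inv_pos; nra.
  apply: (Rmult_le_reg_r (INR N)) => //; field_simplify; nra.
rewrite sum_sin_PI_div // -mulr_natl -INRE mult_INR.
by congr (_ * cot _); field; lra.
Qed.

Lemma sum_abs_sin_mul_dvdn c n m : (0 < n)%N -> (m %| n)%N ->
  (\sum_(s < n | (n %/ m %| s)%N) Rabs (sin (PI * INR (c * s) / INR n)))%R
  = INR (gcdn c m) * cot (PI * INR (gcdn c m) / (2 * INR m)).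
Proof.
move=> n_gt0 /divnK; move: (n %/ m) => M n_eq; subst n.
have [M_gt0 m_gt0] : (0 < M)%N /\ (0 < m)%N by apply/andP; rewrite -muln_gt0.
rewrite (sum_dvdn (fun s => Rabs (sin (PI * INR (c * s) / INR (M * m)))))
  ?dvdn_mulr // mulKn // -sum_abs_sin_mul //.
have M_pos : 0 < INR M by apply: (lt_INR 0); apply/ltP.
have m_pos : 0 < INR m by apply: (lt_INR 0); apply/ltP.
apply: eq_bigr => u _; rewrite mulnCA !mult_INR.
by congr (Rabs (sin _)); field; lra.
Qed.

(* The scope key [%R] in the definitions is MathComp's [ring_scope], so [dist2]
   and [Ppt] are written with ring operations; they unfold to these Stdlib forms. *)
Lemma dist2E P Q : dist2 P Q = sqrt (Rsqr (P.1 - Q.1) + Rsqr (P.2 - Q.2)).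
Proof. by []. Qed.

Lemma PptE n r j :
  Ppt n r j = (r * cos (2 * PI * INR j / INR n), r * sin (2 * PI * INR j / INR n)).
Proof. by []. Qed.

Lemma dist2C P Q : dist2 P Q = dist2 Q P.
Proof. by rewrite !dist2E /Rsqr; congr sqrt; ring. Qed.

Lemma dist2xx P : dist2 P P = 0.
Proof. by rewrite dist2E !Rminus_diag Rsqr_0 Rplus_0_r sqrt_0. Qed.

Lemma chord_length r A B : 0 <= r ->
  dist2 (r * cos A, r * sin A) (r * cos B, r * sin B)
  = 2 * r * Rabs (sin ((A - B) / 2)).
Proof.
move=> r_ge0; rewrite dist2E /=.
have cos_AB := cos_2a_sin ((A - B) / 2).
rewrite (_ : 2 * ((A - B) / 2) = A - B) ?cos_minus in cos_AB; last by field.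
have := sin2_cos2 A; have := sin2_cos2 B; rewrite /Rsqr => circle_B circle_A.
rewrite (_ : _ + _ = Rsqr (2 * r * sin ((A - B) / 2))); last by rewrite /Rsqr; nra.
by rewrite sqrt_Rsqr_abs !Rabs_mult (Rabs_pos_eq r) // Rabs_pos_eq //; lra.
Qed.

Lemma Ppt_modn n r j : (0 < n)%N -> Ppt n r (j %% n) = Ppt n r j.
Proof.
move=> n_gt0; have n_pos : 0 < INR n by apply: (lt_INR 0); apply/ltP.
rewrite !PptE; have -> : 2 * PI * INR j / INR n
          = 2 * PI * INR (j %% n) / INR n + 2 * INR (j %/ n) * PI.
  by rewrite {1}(divn_eq j n) plus_INR mult_INR; field; lra.
by rewrite cos_period sin_period.
Qed.

Lemma dist_Ppt_mulmod n r a s : (0 < n)%N -> (0 < a)%N -> 0 <= r ->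
  dist2 (Ppt n r s) (Ppt n r ((a * s) %% n))
  = 2 * r * Rabs (sin (PI * INR ((a - 1) * s) / INR n)).
Proof.
move=> n_gt0 a_gt0 r_ge0; have n_pos : 0 < INR n by apply: (lt_INR 0); apply/ltP.
rewrite Ppt_modn // dist2C !PptE chord_length //.
have -> : INR (a * s) = INR ((a - 1) * s) + INR s by rewrite -plus_INR; congr INR; nia.
by congr (_ * Rabs (sin _)); field; lra.
Qed.

Theorem theorem2 (n a : nat) (r : R) (hn : (1 <= n)%nat) (ha : (2 <= a)%nat) (hr : 0 < r) :
  total_length n a r
  = 2 * r * INR (gcdn (a - 1) n) * cot (PI * INR (gcdn (a - 1) n) / (2 * INR n))
    - r * INR (gcdn (a - 1) (mdiv n a))
        * cot (PI * INR (gcdn (a - 1) (mdiv n a)) / (2 * INR (mdiv n a))).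
Proof.
have a_gt0 : (0 < a)%N by apply: ltnW.
pose f (s : 'I_n) : 'I_n := Ordinal (ltn_pmod (a * s) hn).
pose D (s t : 'I_n) := dist2 (Ppt n r s) (Ppt n r t).
have edgeE p : edge a p = (p.1 < p.2)%N && ((p.2 == f p.1) || (p.1 == f p.2)).
  by rewrite /edge (modn_small (ltn_ord p.1)) (modn_small (ltn_ord p.2)).
have cycleE s : (f (f s) == s) = (n %/ mdiv n a %| s)%N.
  by rewrite -val_eqE /= mdivE // mulmod_twice_eq.
have Df s : D s (f s) = 2 * r * Rabs (sin (PI * INR ((a - 1) * s) / INR n)).
  by apply: dist_Ppt_mulmod => //; lra.
have sum_all : (\sum_s D s (f s))%R
    = 2 * r * (INR (gcdn (a - 1) n) * cot (PI * INR (gcdn (a - 1) n) / (2 * INR n))).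
  by rewrite -sum_abs_sin_mul // RmultE mulr_sumr; apply: eq_bigr => s _; rewrite Df.
have sum_cycles : (\sum_(s | f (f s) == s) D s (f s))%R
    = 2 * r * (INR (gcdn (a - 1) (mdiv n a))
               * cot (PI * INR (gcdn (a - 1) (mdiv n a)) / (2 * INR (mdiv n a)))).
  rewrite (eq_bigl _ _ cycleE) -(sum_abs_sin_mul_dvdn (a - 1) hn) ?mdivE ?dvdn_gcdr //.
  rewrite RmultE mulr_sumr.
  by apply: eq_bigr => s _; rewrite Df.
have := @sum_functional_graph_edges _ n f D (fun s t => dist2C _ _) (fun s => dist2xx _).
rewrite -(eq_bigl _ _ edgeE) sum_all sum_cycles !mulr2n.
change (\sum_(p | edge a p) D p.1 p.2)%R with (total_length n a r).
by rewrite -RminusE -!RplusE; lra.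
Qed.
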